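(* Let $s\in\mathbb N$ and $\mathbf n=2^{2m_s}\mathbf 1+2^{m_s}\mathbf p+\mathbf q$ with $\mathbf 0\le\mathbf p,\mathbf q<2^{m_s}\mathbf 1$. Then for $\tau=\tau_F$ and every $\mathbf m<2^{m_s}\mathbf 1$, $$\widehat\tau_{\mathbf n}(\Delta^{(m_s)}_{\mathbf m})=2^{s-1-dm_s}W^{(m_s)}_{\mathbf q\mathbf m}\,\delta^{\mathbf p}_{\mathbf m}\,\mathrm I(\Delta^{(m_s)}_{\mathbf m}\subset\widetilde F_{s-1}),$$ and $$\widehat\tau_{\mathbf n}=2^{s-1-dm_s}W^{(m_s)}_{\mathbf q\mathbf p}\,\mathrm I(\Delta^{(m_s)}_{\mathbf p}\subset\widetilde F_{s-1}).$$
   Context: Fix $d\ge2$. $\mathbb G$ is the dyadic group: sequences $g=(g_k)_{k\ge0}$, $g_k\in\{0,1\}$, coordinatewise addition mod 2, product topology; $\mathbb G^d$ its $d$-th power. For $n\in\mathbb N_0$, $n=\sum_kn_k2^k$, $n_k\in\{0,1\}$. Dyadic interval of rank $k$: $\Delta^{(k)}_m=\{g: g_t=m_{k-1-t},\ 0\le t<k\}$; dyadic cube $\Delta^{(k)}_{\mathbf m}=\prod_l\Delta^{(k)}_{m^l}$. Vector order coordinatewise, $\mathbf 0,\mathbf 1$ the constant vectors. Walsh functions $W_n(g)=\prod_k(-1)^{g_kn_k}$, $W_{\mathbf n}(\mathbf g)=\prod_lW_{n^l}(g^l)$; $W^{(k)}_{\mathbf n\mathbf m}$ is the constant value of $W_{\mathbf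 n}$ on $\Delta^{(k)}_{\mathbf m}$ ($\mathbf n,\mathbf m<2^k\mathbf 1$); $R_{k\mathbf 1}:=W_{2^k\mathbf 1}$. $\delta^{\mathbf p}_{\mathbf m}$ is the Kronecker delta, $\mathrm I(\cdot)$ the indicator of a statement. Quasimeasure: $\tau$ on dyadic cubes with $\tau(\Delta^{(k)}_{\mathbf m})=\sum_{\boldsymbol\sigma\in\{0,1\}^d}\tau(\Delta^{(k+1)}_{2\mathbf m+\boldsymbol\sigma})$; for a dyadic cube $\Delta$ of rank $r$, $\widehat\tau_{\mathbf n}(\Delta):=\int_\Delta W_{\mathbf n}d\tau:=\sum_{\Delta^{(k)}_{\mathbf m}\subset\Delta}W^{(k)}_{\mathbf n\mathbf m}\tau(\Delta^{(k)}_{\mathbf m})$ for any $k\ge r$ with $\mathbf n<2^k\mathbf 1$, and $\widehat\tau_{\mathbf n}:=\widehat\tau_{\mathbf n}(\mathbb G^d)$. For nonempty closed $E$, $\tau_E$ is the unique nonnegative quasimeasure with $\tau_E(\mathbb G^d)=1$, $\tau_E(\Delta)=0$ iff $\Delta\cap E=\emptyset$, splitting the value of a cube meeting $E$ equally among its $2^d$ children that meet $E$. Let $m_1=0$, $m_{s+1}=2(2m_s+1)$; $F_s=\bigcup_{\mathbf m,\mathbf m'<2^{m_s}\mathbf 1}\{\mathbf g\in\Delta^{(2m_s)}_{2^{m_s}\mathbf m+\mathbf m'}: R_{2m_s\mathbf 1}(\mathbf g)=W^{(m_s)}_{\mathbf m\mathbf m'}\}$, $\widetilde F_s=\bigcap_{k=1}^sF_k$,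 $\widetilde F_0=\mathbb G^d$, $F=\bigcap_{s\ge1}F_s$. *)

From HB Require Import structures.
From mathcomp Require Import all_boot all_order all_algebra.
From mathcomp Require Import boolp classical_sets reals.
Set Implicit Arguments. Unset Strict Implicit. Unset Printing Implicit Defensive.
Import Order.TTheory GRing.Theory Num.Theory.
Local Open Scope classical_set_scope.
Local Open Scope ring_scope.

(* The dyadic group G = sequences of bits, and its d-th power. *)
Definition Gdy := nat -> bool.
Definition Gd (d : nat) := 'I_d -> Gdy.

Definition bit (n k : nat) : bool := odd (n %/ 2 ^ k).

(* Dyadic cube of rank k with (vector) index m:
   g^l_t = m^l_{k-1-t} for all 0 <= t < k and all l. *)
Definition cube (d k : nat) (m : 'I_d -> nat) : set (Gd d) :=
  [set g | forall (l : 'I_d) (t : nat), (t < k)%N -> g l t = bit (m l) (k - 1 - t)].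

Definition cube_point (d k : nat) (m : 'I_d -> nat) : Gd d :=
  fun l t => (t < k)%N && bit (m l) (k - 1 - t).

Section Walsh.
Variable R : realType.

(* W_n(g) = prod_k (-1)^{g_k n_k}; only k < n can have n_k = 1. *)
Definition W (n : nat) (g : Gdy) : R :=
  \prod_(t < n) (if g t && bit n t then -1 else 1).

Definition Wv (d : nat) (n : 'I_d -> nat) (g : Gd d) : R :=
  \prod_(l < d) W (n l) (g l).

(* W^{(k)}_{n m}: the constant value of W_n on the cube of rank k, index m *)
Definition Wk (d k : nat) (n m : 'I_d -> nat) : R := Wv n (cube_point k m).

Definition Rk (d k : nat) : Gd d -> R := Wv (fun _ => (2 ^ k)%N).

Definition kdelta (d : nat) (p m : 'I_d -> nat) : R := if asbool (p = m) then 1 else 0.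
Definition Ind (P : Prop) : R := if asbool P then 1 else 0.

(* A quasimeasure is given by its values tau k m on the cubes of rank k.
   Integral over the cube of rank r, index m, of W_n: computed at rank
   k = r + max_l n^l (which is >= r and satisfies n < 2^k 1). *)
Definition hat_rank (d : nat) (n : 'I_d -> nat) (r : nat) : nat :=
  (r + \max_(l < d) n l)%N.

Definition hat (d : nat) (tau : nat -> ('I_d -> nat) -> R)
    (n : 'I_d -> nat) (r : nat) (m : 'I_d -> nat) : R :=
  let k := hat_rank n r in
  \sum_(m' : {ffun 'I_d -> 'I_(2 ^ k)} |
          asbool (cube k (fun l => val (m' l)) `<=` cube r m))
     Wk k n (fun l => val (m' l)) * tau k (fun l => val (m' l)).

Definition hat_full (d : nat) (tau : nat -> ('I_d -> nat) -> R) (n : 'I_d -> nat) : R :=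
  hat tau n 0 (fun _ => 0%N).

Definition meets (d : nat) (E : set (Gd d)) (k : nat) (m : 'I_d -> nat) : Prop :=
  cube k m `&` E !=set0.

Definition nchildren (d : nat) (E : set (Gd d)) (k : nat) (m : 'I_d -> nat) : nat :=
  #|[set sg : {ffun 'I_d -> bool} |
      asbool (meets E k.+1 (fun l => (2 * m l + sg l)%N))]|.

Fixpoint tauE (d : nat) (E : set (Gd d)) (k : nat) (m : 'I_d -> nat) : R :=
  match k with
  | 0 => 1
  | k'.+1 =>
      if asbool (meets E k m)
      then tauE E k' (fun l => (m l %/ 2)%N) / (nchildren E k' (fun l => (m l %/ 2)%N))%:R
      else 0
  end.

End Walsh.

(* m_1 = 0, m_{s+1} = 2(2 m_s + 1); (ms 0 is an unused dummy value) *)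
Fixpoint ms (s : nat) : nat :=
  match s with
  | 0 => 0
  | 1 => 0
  | s'.+1 => (2 * (2 * ms s' + 1))%N
  end.

Section Sets.
Variable R : realType.
Variable d : nat.

Definition Fs (s : nat) : set (Gd d) :=
  [set g | exists m m' : 'I_d -> nat,
     [/\ forall l, (m l < 2 ^ ms s)%N, forall l, (m' l < 2 ^ ms s)%N,
         cube (2 * ms s) (fun l => (2 ^ ms s * m l + m' l)%N) g &
         @Rk R d (2 * ms s) g = Wk R (ms s) m m']].

Definition Ftilde (s : nat) : set (Gd d) :=
  [set g | forall k, (1 <= k <= s)%N -> Fs k g].

Definition Fset : set (Gd d) := [set g | forall s, (1 <= s)%N -> Fs s g].

End Sets.

(* Since [tau_F] is a quasimeasure and [W_n] only depends on the first
   [2 m_s + 1] digits, [hat tau_F n] on [Delta^(m_s)_m] can be computed as a sum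
   over the cubes of rank [2 m_s + 1] inside it.  The set [F_j] only constrains
   the digits of rank [2 m_j], through the sign of [R_(2 m_j 1)], and changing
   one coordinate there switches [F_j] on or off.  Hence a cube meets [F] iff
   its canonical point lies in every [F_j] of lower rank, a cube meeting [F] has
   [2^d] children meeting [F] except at the ranks [2 m_j], where exactly half of
   them do, and [tau_F] takes one value on all cubes of a given rank meeting [F].
   On the child of index [2 (2^m_s m + y) + sigma] we get
   [W_n = W_q(m) W_p(y) (-1)^|sigma|], and the cube meets [F] iff
   [Delta_m] is in [F~_(s-1)] and [(-1)^|sigma| = W^(m_s)_(m y)].  Summing over
   [sigma], then over [y] by orthogonality of the Walsh system, leaves
   [delta^p_m] times the constant; [hat tau_F n] is the sum of these over [m]. *)

From HB Require Import structures.
From mathcomp Require Import all_boot all_order all_algebra.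
From mathcomp Require Import boolp classical_sets reals.
From mathcomp Require Import zify ring lra.
Import Order.TTheory GRing.Theory Num.Theory.
Set Implicit Arguments. Unset Strict Implicit. Unset Printing Implicit Defensive.

(** * Binary digits *)

Lemma bit0 m : bit m 0 = odd m.
Proof. by rewrite /bit expn0 divn1. Qed.

Lemma bitS m k : bit m k.+1 = bit (m %/ 2) k.
Proof. by rewrite /bit expnS divnMA. Qed.

Lemma bit_small m k t : m < 2 ^ k -> k <= t -> bit m t = false.
Proof.
by move=> hm hkt; rewrite /bit divn_small //; apply: (leq_trans hm); rewrite leq_exp2l.
Qed.

Lemma bit_inj k m1 m2 : m1 < 2 ^ k -> m2 < 2 ^ k ->
  (forall t, t < k -> bit m1 t = bit m2 t) -> m1 = m2.
Proof.
elim: k m1 m2 => [|k IH] m1 m2 h1 h2 hb.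
  by move: h1 h2; rewrite expn0 !ltnS !leqn0 => /eqP-> /eqP->.
rewrite -(odd_double_half m1) -(odd_double_half m2) -!bit0 hb //.
rewrite (IH m1./2 m2./2) //; last by move=> t ht; rewrite -!divn2 -!bitS hb.
- by rewrite -divn2 ltn_divLR //; move: h1; rewrite expnS; lia.
- by rewrite -divn2 ltn_divLR //; move: h2; rewrite expnS; lia.
Qed.

Lemma bitDMpow c a b t : a < 2 ^ c ->
  bit (a + 2 ^ c * b) t = if t < c then bit a t else bit b (t - c).
Proof.
elim: c a t => [|c IH] a t ha.
  by move: ha; rewrite expn0 ltnS leqn0 => /eqP->; rewrite add0n mul1n subn0.
case: t => [|t]; first by rewrite !bit0 /= oddD expnS -mulnA oddM addbF.
rewrite !bitS expnS -mulnA [2 * _]mulnC divnDMl // IH; last first.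
  by rewrite ltn_divLR //; move: ha; rewrite expnS; lia.
by rewrite ltnS subSS -bitS.
Qed.

Lemma bit_mod p c t : t < c -> bit (p %% 2 ^ c) t = bit p t.
Proof.
move=> ht; rewrite [in RHS](divn_eq p (2 ^ c)) mulnC addnC bitDMpow ?ht //.
by rewrite ltn_mod expn_gt0.
Qed.

Lemma pow2_digits_lt r t x y : x < 2 ^ r -> y < 2 ^ t -> 2 ^ t * x + y < 2 ^ (r + t).
Proof.
move=> hx hy; rewrite expnD mulnC.
have : 2 ^ t * x.+1 <= 2 ^ t * 2 ^ r by rewrite leq_mul2l hx orbT.
lia.
Qed.

Lemma ltn_div_pow2 r t a : a < 2 ^ (r + t) -> a %/ 2 ^ t < 2 ^ r.
Proof. by rewrite ltn_divLR ?expn_gt0 // -expnD. Qed.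

Lemma ltn_mod_pow2 t a : a %% 2 ^ t < 2 ^ t.
Proof. by rewrite ltn_mod expn_gt0. Qed.

Lemma ltn_double_add k x (b : bool) : x < 2 ^ k -> 2 * x + b < 2 ^ k.+1.
Proof. by rewrite expnS; case: b; lia. Qed.

Lemma ltn_half_pow2 k a : a < 2 ^ k.+1 -> a %/ 2 < 2 ^ k.
Proof. by rewrite ltn_divLR // mulnC -expnS. Qed.

Lemma euclid_inj D x1 y1 x2 y2 : y1 < D -> y2 < D ->
  D * x1 + y1 = D * x2 + y2 -> x1 = x2 /\ y1 = y2.
Proof.
move=> h1 h2 e; have := congr1 (divn^~ D) e; have := congr1 (modn^~ D) e => /=.
by rewrite ![D * _]mulnC !divnMDl ?modnMDl ?divn_small ?modn_small //; lia.
Qed.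

Lemma half_double_add x (b : bool) : (2 * x + b) %/ 2 = x.
Proof. by case: b; rewrite /= ?addn0 ?addn1; lia. Qed.

Lemma msS s : 0 < s -> ms s.+1 = 2 * (2 * ms s + 1).
Proof. by case: s. Qed.

Lemma ms_lt i j : 0 < i -> i < j -> ms i < ms j.
Proof.
move=> hi; elim: j => // j IH; rewrite ltnS leq_eqVlt => /orP[/eqP<-|h].
  by rewrite msS //; lia.
by have := IH h; rewrite msS; lia.
Qed.

Lemma ms_le i j : 0 < i -> i <= j -> ms i <= ms j.
Proof. by move=> hi; rewrite leq_eqVlt => /orP[/eqP->//|/(ms_lt hi)/ltnW]. Qed.

Lemma ms_inj i j : 0 < i -> 0 < j -> ms i = ms j -> i = j.
Proof.
by move=> hi hj e; case: (ltngtP i j) => // h; [move: (ms_lt hi h) | move: (ms_lt hj h)];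
  rewrite e ltnn.
Qed.

Lemma double_ms_lt j s : 0 < j -> j < s -> 2 * ms j < ms s.
Proof. by move=> hj hs; have := ms_le (ltn_trans hj (ltnSn j)) hs; rewrite msS //; lia. Qed.

(* Given the digits of lower rank, [F_j] only constrains those of rank [2 m_j]. *)
Definition pivot i := exists j, 0 < j /\ 2 * ms j = i.

Lemma pivot_between s i : 0 < s -> ms s <= i < ms s.+1 -> pivot i -> i = 2 * ms s.
Proof.
move=> hs /andP[h1 h2] [j [hj ei]]; subst i.
case: (ltngtP j s) => [hjs|hjs|-> //]; first by have := double_ms_lt hj hjs; lia.
by have := ms_le (ltn_trans hs (ltnSn s)) hjs; lia.
Qed.

Definition ipoint k u : Gdy := fun t => (t < k) && bit u (k - 1 - t).

Lemma ipoint_low r t x y u : y < 2 ^ t -> u < r ->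
  ipoint (r + t) (2 ^ t * x + y) u = ipoint r x u.
Proof.
move=> hy hu; rewrite /ipoint hu ltn_addr //= addnC bitDMpow // ifN; last by lia.
by congr bit; lia.
Qed.

Lemma ipoint_high r t x y u : y < 2 ^ t ->
  ipoint (r + t) (2 ^ t * x + y) (r + u) = ipoint t y u.
Proof.
move=> hy; rewrite /ipoint ltn_add2l addnC bitDMpow //.
case: (ltnP u t) => hu //=; rewrite ifT; last by lia.
by congr bit; lia.
Qed.

Lemma ipoint_child k x (b : bool) u : u < k -> ipoint k.+1 (2 * x + b) u = ipoint k x u.
Proof. by move=> hu; rewrite -[k.+1]addn1 -[2 * x]/(2 ^ 1 * x) ipoint_low //; case: b. Qed.

Lemma ipoint_child_top k x (b : bool) : ipoint k.+1 (2 * x + b) k = b.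
Proof.
by rewrite -[k.+1]addn1 -[2 * x]/(2 ^ 1 * x) -[k in ipoint _ _ k]addn0 ipoint_high; case: b.
Qed.

Lemma ipoint_top c m y (b : bool) : (y < 2 ^ c) ->
  let g := ipoint (2 * c).+1 (2 * (2 ^ c * m + y) + b) in
  [/\ forall u, (u < c) -> g u = ipoint c m u,
      forall u, (u < c) -> g (c + u) = ipoint c y u & g (2 * c) = b].
Proof.
move=> hy g; have e : (2 * c = c + c) by lia.
split=> [u hu|u hu|]; last exact: ipoint_child_top.
  by rewrite /g ipoint_child ?e ?ipoint_low //; lia.
by rewrite /g ipoint_child ?e ?ipoint_high //; lia.
Qed.

Local Open Scope classical_set_scope.

(** * Dyadic cubes *)

Section Cubes.
Variable d : nat.
Implicit Types (g h : Gd d) (m a : 'I_d -> nat).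

Lemma cube_pointE k m l : cube_point k m l = ipoint k (m l).
Proof. by []. Qed.

Lemma cubeS k m g :
  cube k.+1 m g <-> cube k (fun l => m l %/ 2) g /\ forall l, g l k = odd (m l).
Proof.
have e t : t < k -> k.+1 - 1 - t = (k - 1 - t).+1 by lia.
have e0 : k.+1 - 1 - k = 0 by lia.
split=> [h|[h1 h2] l t].
  split=> [l t ht|l]; last by rewrite h // e0 bit0.
  by rewrite h 1?ltnW // e // bitS.
rewrite ltnS leq_eqVlt => /orP[/eqP->|ht]; first by rewrite h2 e0 bit0.
by rewrite h1 // e // bitS.
Qed.

Lemma cube_ext k m g g' : (forall l t, t < k -> g l t = g' l t) ->
  cube k m g -> cube k m g'.
Proof. by move=> e h l t ht; rewrite -e // h. Qed.

Lemma cube_pointP k m : cube k m (cube_point k m).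
Proof. by move=> l t ht; rewrite /cube_point ht. Qed.

Lemma cube_agree k m g g' : cube k m g -> cube k m g' ->
  forall l t, t < k -> g l t = g' l t.
Proof. by move=> h h' l t ht; rewrite h // h'. Qed.

Lemma cube_inj k m1 m2 g : (forall l, m1 l < 2 ^ k) -> (forall l, m2 l < 2 ^ k) ->
  cube k m1 g -> cube k m2 g -> m1 = m2.
Proof.
move=> b1 b2 h1 h2; apply: funext => l; apply: (bit_inj (b1 l) (b2 l)) => t ht.
have -> : t = k - 1 - (k - 1 - t) by lia.
by rewrite -h1 ?h2 //; lia.
Qed.

Lemma cube_cover k g : exists2 m, forall l, m l < 2 ^ k & cube k m g.
Proof.
elim: k => [|k [m hm hc]]; first by exists (fun _ => 0) => // l t.
exists (fun l => 2 * m l + g l k) => [l|].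
  by have := hm l; rewrite expnS; case: (g l k); lia.
apply/cubeS; split; last by move=> l; rewrite oddD oddM /=; case: (g l k).
by rewrite (_ : (fun l => _) = m) //; apply: funext => l; rewrite half_double_add.
Qed.

Lemma cube_cover2 c g : exists a b, [/\ forall l, a l < 2 ^ c, forall l, b l < 2 ^ c &
  cube (2 * c) (fun l => 2 ^ c * a l + b l) g].
Proof.
have [u hu hc] := cube_cover (2 * c) g.
exists (fun l => u l %/ 2 ^ c), (fun l => u l %% 2 ^ c); split.
- by move=> l; rewrite ltn_divLR ?expn_gt0 // -expnD addnn -mul2n.
- by move=> l; rewrite ltn_mod expn_gt0.
- rewrite (_ : (fun l => _) = u) //.
  by apply: funext => l; rewrite mulnC -divn_eq.
Qed.

Lemma cube_divpow r t a : cube (r + t) a `<=` cube r (fun l => a l %/ 2 ^ t).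
Proof.
move=> g h l u hu; rewrite h; last by lia.
rewrite /bit -divnMA -expnD; congr (odd (_ %/ 2 ^ _)); lia.
Qed.

Lemma subcubeE r t a m : (forall l, m l < 2 ^ r) -> (forall l, a l < 2 ^ (r + t)) ->
  (cube (r + t) a `<=` cube r m <-> (fun l => a l %/ 2 ^ t) = m).
Proof.
move=> hm ha; split=> [hs|<-]; last exact: cube_divpow.
apply: (@cube_inj r _ _ (cube_point (r + t) a)) => //.
- by move=> l; rewrite ltn_divLR ?expn_gt0 // -expnD.
- exact/cube_divpow/cube_pointP.
- exact/hs/cube_pointP.
Qed.

Lemma subcubeS r k a m : r <= k ->
  (cube k.+1 a `<=` cube r m <-> cube k (fun l => a l %/ 2) `<=` cube r m).
Proof.
move=> hrk; split=> hs g hg; last by apply: hs; case/cubeS: hg.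
pose g' : Gd d := fun l t => if t == k then odd (a l) else g l t.
have hg' : cube k.+1 a g'.
  apply/cubeS; split; last by move=> l; rewrite /g' eqxx.
  by apply: cube_ext hg => l t ht; rewrite /g' ifN //; lia.
by apply: cube_ext (hs _ hg') => l t ht; rewrite /g' ifN //; lia.
Qed.

Lemma halve_child a (σ : {ffun 'I_d -> bool}) :
  (fun l => (2 * a l + σ l) %/ 2) = a.
Proof. by apply: funext => l; rewrite half_double_add. Qed.

Lemma child_sub k a (σ : {ffun 'I_d -> bool}) :
  cube k.+1 (fun l => 2 * a l + σ l) `<=` cube k a.
Proof. by move=> g /cubeS[+ _]; rewrite halve_child. Qed.

Lemma child_point k a (σ : {ffun 'I_d -> bool}) l :
  cube_point k.+1 (fun l => 2 * a l + σ l) l k = σ l.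
Proof. exact: ipoint_child_top. Qed.

End Cubes.

Local Open Scope ring_scope.

(** * Walsh functions *)

Section Walsh.
Variable R : realType.

Definition sgn (b : bool) : R := if b then -1 else 1.

Lemma sgn_sqr b : sgn b ^+ 2 = 1.
Proof. by case: b; rewrite /sgn ?sqrrN expr1n. Qed.

Lemma sgnN b : sgn (~~ b) = - sgn b.
Proof. by case: b; rewrite /sgn ?opprK. Qed.

Lemma W_trunc n K (g : Gdy) : (n < 2 ^ K)%N ->
  W R n g = \prod_(t < K) sgn (g t && bit n t).
Proof.
have ext K1 K2 : (K1 <= K2)%N -> (forall t, K1 <= t -> bit n t = false)%N ->
    \prod_(t < K1) sgn (g t && bit n t) = \prod_(t < K2) sgn (g t && bit n t).
  move=> hK hb; rewrite -!(big_mkord xpredT (fun t => sgn (g t && bit n t))).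
  rewrite (big_cat_nat (leq0n K1) hK) /= [X in _ = _ * X]big1_seq ?mulr1 //.
  by move=> t /andP[_]; rewrite mem_index_iota => /andP[h _]; rewrite hb // andbF.
move=> hn; rewrite /W; case: (leqP n K) => h.
  by apply: ext => // t; apply: bit_small (ltn_expl n (ltnSn 1)).
by symmetry; apply: ext => [|t]; [exact: ltnW | apply: bit_small hn].
Qed.

Lemma W_prefix n K (g g' : Gdy) : (n < 2 ^ K)%N ->
  (forall t, (t < K)%N -> g t = g' t) -> W R n g = W R n g'.
Proof. by move=> hn e; rewrite !(W_trunc _ hn); apply: eq_bigr => t _; rewrite e. Qed.

Lemma W_sqr n (g : Gdy) : W R n g ^+ 2 = 1.
Proof.
by rewrite /W -prodrXl; apply: big1 => t _; case: ifP; rewrite ?sqrrN expr1n.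
Qed.

Lemma Wv_sqr d n (g : Gd d) : Wv R n g ^+ 2 = 1.
Proof. by rewrite /Wv -prodrXl; apply: big1 => l _; rewrite W_sqr. Qed.

Lemma W_bool (b : bool) (g : Gdy) : W R b g = sgn (b && g 0%N).
Proof.
by case: b; rewrite /W ?big_ord0 ?big_ord1 // bit0 andbT.
Qed.

Lemma W_addMpow r q n (g : Gdy) : (q < 2 ^ r)%N ->
  W R (q + 2 ^ r * n) g = W R q g * W R n (fun u => g (r + u)%N).
Proof.
move=> hq; have hn : (n < 2 ^ n)%N := ltn_expl n (ltnSn 1).
have hqn : (q + 2 ^ r * n < 2 ^ (n + r))%N by rewrite addnC; apply: pow2_digits_lt.
rewrite (W_trunc _ hqn) addnC big_split_ord (W_trunc _ hq) (W_trunc _ hn) /=.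
congr (_ * _); apply: eq_bigr => t _; rewrite bitDMpow //.
  by rewrite ltn_ord.
by rewrite ifN -?leqNgt ?leq_addr // addKn.
Qed.

Lemma W_pow2 c (g : Gdy) : W R (2 ^ c) g = sgn (g c).
Proof.
have := @W_addMpow c 0 true g (expn_gt0 2 c).
by rewrite add0n muln1 => ->; rewrite W_bool /W big_ord0 mul1r addn0.
Qed.

Lemma RkE d c (g : Gd d) : Rk R c g = \prod_(l < d) sgn (g l c).
Proof. by apply: eq_bigr => l _; rewrite W_pow2. Qed.

End Walsh.

Section Reindex.
Variable R : realType.

Lemma sum_pair_bij (A B C : finType) (f : B -> C -> A) (g : A -> B * C) (G : A -> R) :
  (forall x y, g (f x y) = (x, y)) -> (forall a, f (g a).1 (g a).2 = a) ->
  \sum_a G a = \sum_x \sum_y G (f x y).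
Proof.
move=> fK gK; rewrite pair_bigA /= (reindex (fun p => f p.1 p.2)) //=.
by apply: onW_bij; exists g => [[x y]|a]; rewrite ?fK ?gK.
Qed.

Lemma sum_ffun_pair_bij (I A B C : finType) (f : B -> C -> A) (g : A -> B * C)
    (G : {ffun I -> A} -> R) :
  (forall x y, g (f x y) = (x, y)) -> (forall a, f (g a).1 (g a).2 = a) ->
  \sum_a G a = \sum_(x : {ffun I -> B}) \sum_(y : {ffun I -> C}) G [ffun i => f (x i) (y i)].
Proof.
move=> fK gK.
apply: (sum_pair_bij (f := fun (x : {ffun I -> B}) (y : {ffun I -> C}) => [ffun i => f (x i) (y i)])
  (g := fun a => ([ffun i => (g (a i)).1], [ffun i => (g (a i)).2]))).
  by move=> x y; congr pair; apply/ffunP => i; rewrite !ffunE fK.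
by move=> a; apply/ffunP => i; rewrite !ffunE gK.
Qed.

Section Splittings.
Variables (r t k : nat).

Let digits (x : 'I_(2 ^ r)) (y : 'I_(2 ^ t)) : 'I_(2 ^ (r + t)) :=
  Ordinal (pow2_digits_lt (ltn_ord x) (ltn_ord y)).
Let undigits (a : 'I_(2 ^ (r + t))) :=
  (Ordinal (ltn_div_pow2 (ltn_ord a)), Ordinal (ltn_mod_pow2 t a)).

Lemma digitsK x y : undigits (digits x y) = (x, y).
Proof.
have y_lt := ltn_ord y.
congr pair; apply: val_inj; rewrite /= mulnC.
  by rewrite divnMDl ?expn_gt0 // divn_small ?addn0.
by rewrite modnMDl modn_small.
Qed.

Lemma undigitsK a : digits (undigits a).1 (undigits a).2 = a.
Proof. by apply: val_inj; rewrite /= mulnC -divn_eq. Qed.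

Let child (x : 'I_(2 ^ k)) (b : bool) : 'I_(2 ^ k.+1) :=
  Ordinal (ltn_double_add b (ltn_ord x)).
Let parent (a : 'I_(2 ^ k.+1)) := (Ordinal (ltn_half_pow2 (ltn_ord a)), odd a).

Lemma childK x b : parent (child x b) = (x, b).
Proof.
congr pair; first by apply: val_inj; rewrite /= half_double_add.
by rewrite /= oddD oddM; case: b.
Qed.

Lemma parentK a : child (parent a).1 (parent a).2 = a.
Proof. by apply: val_inj; rewrite /= -{3}(odd_double_half a) -divn2; lia. Qed.

Lemma sum_ord_children (G : nat -> R) :
  \sum_(a < 2 ^ k.+1) G a = \sum_(x < 2 ^ k) \sum_(b : bool) G (2 * x + b)%N.
Proof. exact: (sum_pair_bij (G \o val) childK parentK). Qed.

Lemma sum_ffun_children d (G : ('I_d -> nat) -> R) :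
  \sum_(a : {ffun 'I_d -> 'I_(2 ^ k.+1)}) G (fun l => val (a l)) =
  \sum_(x : {ffun 'I_d -> 'I_(2 ^ k)}) \sum_(σ : {ffun 'I_d -> bool})
     G (fun l => 2 * x l + σ l)%N.
Proof.
rewrite (sum_ffun_pair_bij _ childK parentK); apply: eq_bigr => x _; apply: eq_bigr => σ _.
by congr G; apply: funext => l; rewrite ffunE.
Qed.

Lemma sum_ffun_digits d (G : ('I_d -> nat) -> R) :
  \sum_(a : {ffun 'I_d -> 'I_(2 ^ (r + t))}) G (fun l => val (a l)) =
  \sum_(x : {ffun 'I_d -> 'I_(2 ^ r)}) \sum_(y : {ffun 'I_d -> 'I_(2 ^ t)})
     G (fun l => 2 ^ t * x l + y l)%N.
Proof.
rewrite (sum_ffun_pair_bij _ digitsK undigitsK); apply: eq_bigr => x _; apply: eq_bigr => y _.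
by congr G; apply: funext => l; rewrite ffunE.
Qed.

End Splittings.
End Reindex.

Section Orthogonality.
Variable R : realType.

Lemma W_ipoint_child c p x (b : bool) : (p < 2 ^ c.+1)%N ->
  W R p (ipoint c.+1 (2 * x + b)) = W R (p %% 2 ^ c) (ipoint c x) * sgn R (bit p c && b).
Proof.
move=> hp; have hpc : (p %/ 2 ^ c = bit p c)%N.
  have : (p %/ 2 ^ c < 2)%N by rewrite ltn_divLR ?expn_gt0 //; move: hp; rewrite expnS; lia.
  by rewrite /bit; case: (p %/ 2 ^ c)%N => [|[]].
rewrite {1}(divn_eq p (2 ^ c)) addnC mulnC hpc W_addMpow ?ltn_mod_pow2 // W_bool.
rewrite addn0 ipoint_child_top; congr (_ * _).
by apply: (W_prefix R (ltn_mod_pow2 c p)) => u; apply: ipoint_child.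
Qed.

Lemma W_orthogonal c p m : (p < 2 ^ c)%N -> (m < 2 ^ c)%N ->
  \sum_(u < 2 ^ c) W R p (ipoint c u) * W R m (ipoint c u) = (2 ^ c)%:R * (p == m)%:R.
Proof.
elim: c p m => [|c IH] p m hp hm.
  move: hp hm; rewrite expn0 !ltnS !leqn0 => /eqP-> /eqP->.
  by rewrite big_ord1 /W !big_ord0 mulr1.
rewrite (sum_ord_children _ (fun u => W R p (ipoint c.+1 u) * W R m (ipoint c.+1 u))).
have inner (x y : R) : \sum_(b : bool) x * sgn R (bit p c && b) * (y * sgn R (bit m c && b))
    = x * y * (2 * (bit p c == bit m c)%:R).
  by rewrite big_bool /= !andbF !andbT /sgn; case: (bit p c); case: (bit m c) => /=; ring.
under eq_bigr => x _ do under eq_bigr => b _ do rewrite !W_ipoint_child //.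
under eq_bigr => x _ do rewrite inner.
rewrite -mulr_suml IH ?ltn_mod_pow2 //.
have -> : (p == m) = (p %% 2 ^ c == m %% 2 ^ c)%N && (bit p c == bit m c).
  apply/eqP/andP => [->//|[/eqP e /eqP e']].
  apply: (bit_inj hp hm) => t; rewrite ltnS leq_eqVlt => /orP[/eqP->//|ht].
  by rewrite -(bit_mod p ht) -(bit_mod m ht) e.
by rewrite expnS natrM; case: (_ == _); case: (_ == _); rewrite /=; ring.
Qed.

End Orthogonality.

Lemma W_top R c p q m y (b : bool) : (p < 2 ^ c)%N -> (q < 2 ^ c)%N -> (y < 2 ^ c)%N ->
  W R (2 ^ (2 * c) + 2 ^ c * p + q) (ipoint (2 * c).+1 (2 * (2 ^ c * m + y) + b)) =
  W R q (ipoint c m) * W R p (ipoint c y) * sgn R b.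
Proof.
move=> hp hq hy; have [lo mid top] := ipoint_top m b hy.
have -> : (2 ^ (2 * c) + 2 ^ c * p + q = q + 2 ^ c * (p + 2 ^ c * true))%N.
  by rewrite muln1 mulnDr -expnD addnn -mul2n; lia.
rewrite !W_addMpow // W_bool /= addn0 addnn -mul2n top -mulrA; congr (_ * (_ * _)).
  exact: W_prefix hq lo.
exact: W_prefix hp mid.
Qed.

Lemma Wk_child R d k n a (σ : {ffun 'I_d -> bool}) : (forall l, n l < 2 ^ k)%N ->
  Wk R k.+1 n (fun l => 2 * a l + σ l)%N = Wk R k n a.
Proof.
move=> hn; apply: eq_bigr => l _; apply: (W_prefix R (hn l)) => t ht.
by rewrite !cube_pointE ipoint_child.
Qed.

Lemma kdeltaE (R : realType) d (p m : 'I_d -> nat) : kdelta R p m = \prod_(l < d) (p l == m l)%:R.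
Proof.
rewrite /kdelta; case: asboolP => [->|ne]; first by rewrite big1 // => l _; rewrite eqxx.
have [[l hl]|H] := pselect (exists l, p l != m l); last first.
  by case: ne; apply: funext => l; apply/eqP/contraT => hl; case: H; exists l.
by rewrite (bigD1 l) //= (negPf hl) mul0r.
Qed.

Lemma Wk_orthogonal (R : realType) d c (p m : 'I_d -> nat) :
  (forall l, p l < 2 ^ c)%N -> (forall l, m l < 2 ^ c)%N ->
  \sum_(y : {ffun 'I_d -> 'I_(2 ^ c)}) Wk R c p (fun l => val (y l)) * Wk R c m (fun l => val (y l))
  = (2 ^ (c * d))%:R * kdelta R p m.
Proof.
move=> hp hm; under eq_bigr => y _ do rewrite -big_split /=.
rewrite -(bigA_distr_bigA
  (fun l (u : 'I_(2 ^ c)) => W R (p l) (ipoint c u) * W R (m l) (ipoint c u))) /=.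
under eq_bigr => l _ do rewrite W_orthogonal //.
by rewrite big_split /= -kdeltaE prodr_const card_ord -natrX -expnM.
Qed.

(** * The sets [F_s] *)

Section Fs.
Variables (R : realType) (d : nat).
Implicit Types (g h : Gd d) (a b : 'I_d -> nat).

Definition flip g (l0 : 'I_d) i : Gd d :=
  fun l t => if (l == l0) && (t == i)%N then ~~ g l t else g l t.

Lemma Rk_flip g l0 c : Rk R c (flip g l0 c) = - Rk R c g.
Proof.
rewrite !RkE (bigD1 l0) //= [in RHS](bigD1 l0) //= /flip !eqxx sgnN mulNr.
by congr (- (_ * _)); apply: eq_bigr => l /negPf ->.
Qed.

Lemma Fs_prefix j g g' : (forall l t, (t <= 2 * ms j)%N -> g l t = g' l t) ->
  Fs R j g -> Fs R j g'.
Proof.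
move=> e [a [b [ha hb hc he]]]; exists a, b; split => //.
  by apply: cube_ext hc => l t ht; apply: e; apply: ltnW.
by rewrite -he !RkE; apply: eq_bigr => l _; rewrite e.
Qed.

Lemma FsE j g a b : (forall l, a l < 2 ^ ms j)%N -> (forall l, b l < 2 ^ ms j)%N ->
  cube (2 * ms j) (fun l => 2 ^ ms j * a l + b l)%N g ->
  Fs R j g <-> Rk R (2 * ms j) g = Wk R (ms j) a b.
Proof.
move=> ha hb hc; split=> [[a' [b' [ha' hb' hc' ->]]]|]; last by exists a, b.
have lt (x y : 'I_d -> nat) :
    (forall l, x l < 2 ^ ms j)%N -> (forall l, y l < 2 ^ ms j)%N -> forall l,
    (2 ^ ms j * x l + y l < 2 ^ (2 * ms j))%N.
  by move=> hx hy l; rewrite mul2n -addnn; apply: pow2_digits_lt.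
have e := cube_inj (lt _ _ ha' hb') (lt _ _ ha hb) hc' hc.
have /all_and2[ea eb] l := euclid_inj (hb' l) (hb l) (congr1 (fun f => f l) e).
by rewrite (funext ea) (funext eb).
Qed.

Lemma Fs_or_flip j g l0 : Fs R j g \/ Fs R j (flip g l0 (2 * ms j)).
Proof.
have [a [b [ha hb hc]]] := cube_cover2 (ms j) g.
have hc' : cube (2 * ms j) (fun l => 2 ^ ms j * a l + b l)%N (flip g l0 (2 * ms j)).
  by apply: cube_ext hc => l t ht; rewrite /flip (ltn_eqF ht) andbF.
rewrite (FsE ha hb hc) (FsE ha hb hc') Rk_flip.
have : Rk R (2 * ms j) g ^+ 2 == Wk R (ms j) a b ^+ 2 by rewrite !Wv_sqr.
by rewrite eqf_sqr => /orP[/eqP|/eqP->]; [left | right; rewrite opprK].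
Qed.

End Fs.

Section Extension.
Variables (R : realType) (d : nat) (l0 : 'I_d).
Implicit Types (g h : Gd d).

(* Scanning the coordinates upwards from rank [k], the one of rank [2 m_j] on
   axis [l0] is flipped whenever [F_j] fails there; this repairs [F_j] and
   leaves every coordinate below it, hence every earlier [F_i], untouched. *)
Definition correct k h i : Gd d :=
  if asbool (exists j, [/\ 0 < j, 2 * ms j = i, k <= i & ~ Fs R j h])%N
  then flip h l0 i else h.

Fixpoint corrections k h i : Gd d :=
  if i is i'.+1 then correct k (corrections k h i') i' else h.

Definition extend k h : Gd d := fun l t => corrections k h t.+1 l t.

Lemma correct_other k h i l t : t != i -> correct k h i l t = h l t.
Proof. by move=> ne; rewrite /correct; case: asboolP => // _; rewrite /flip (negPf ne) andbF. Qed.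

Lemma corrections_stable k h i u l t : (t < i)%N ->
  corrections k h (i + u) l t = corrections k h i l t.
Proof.
move=> ht; elim: u => [|u IH]; first by rewrite addn0.
by rewrite addnS /= correct_other ?IH //; apply/eqP; lia.
Qed.

Lemma corrections_low k h i l t : (t < k)%N -> corrections k h i l t = h l t.
Proof.
move=> ht; elim: i => //= i IH; rewrite /correct; case: asboolP => [[j [_ e hk _]]|_] //.
by rewrite /flip ifN ?IH //; apply/negP => /andP[_ /eqP]; lia.
Qed.

Lemma extendE k h i l t : (t < i)%N -> extend k h l t = corrections k h i l t.
Proof. by move=> ht; rewrite /extend -(subnKC ht) corrections_stable. Qed.

Lemma extend_low k h l t : (t < k)%N -> extend k h l t = h l t.
Proof. exact: corrections_low. Qed.

Lemma extend_Fset k h : (forall j, 0 < j -> 2 * ms j < k -> Fs R j h)%N ->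
  Fset R (extend k h).
Proof.
move=> hF j hj; set c := (2 * ms j)%N.
apply: (@Fs_prefix R d j (corrections k h c.+1)) => [l t ht|].
  by rewrite (extendE _ _ (i := c.+1)).
case: (ltnP c k) => hck.
  by apply: (Fs_prefix _ (hF j hj hck)) => l t ht; rewrite corrections_low //; lia.
rewrite /= /correct; case: asboolP => [[j' [hj' e' _ nF]]|nex].
  have ejj : j' = j by apply: ms_inj => //; rewrite /c in e'; lia.
  by subst j'; case: (Fs_or_flip R j (corrections k h c) l0).
by apply: contrapT => nF; apply: nex; exists j.
Qed.

End Extension.

Section SignVectors.
Variables (R : realType) (d : nat) (l0 : 'I_d).
Local Close Scope classical_set_scope.

Definition sprod (σ : {ffun 'I_d -> bool}) : R := \prod_(l < d) sgn R (σ l).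

Lemma sprod_sqr σ : sprod σ ^+ 2 = 1.
Proof. by rewrite /sprod -prodrXl; apply: big1 => l _; rewrite sgn_sqr. Qed.

Lemma card_sprod_eq (v : R) : v ^+ 2 = 1 ->
  #|[set σ : {ffun 'I_d -> bool} | sprod σ == v]| = (2 ^ d.-1)%N.
Proof.
move=> hv; pose fl (σ : {ffun 'I_d -> bool}) : {ffun 'I_d -> bool} :=
  [ffun l => if l == l0 then ~~ σ l else σ l].
have flK : involutive fl.
  by move=> σ; apply/ffunP => l; rewrite !ffunE; case: eqP; rewrite ?negbK.
have sprod_fl σ : sprod (fl σ) = - sprod σ.
  rewrite /sprod (bigD1 l0) //= [in RHS](bigD1 l0) //= !ffunE eqxx sgnN mulNr.
  by congr (- (_ * _)); apply: eq_bigr => l /negPf hl; rewrite ffunE hl.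
have vN : v != - v.
  have : v ^+ 2 == 1 ^+ 2 by rewrite hv expr1n.
  by rewrite eqf_sqr => /orP[]/eqP->; apply/eqP; lra.
have sprodN σ : (sprod σ != v) = (sprod σ == - v).
  have : sprod σ ^+ 2 == v ^+ 2 by rewrite sprod_sqr hv.
  by rewrite eqf_sqr => /orP[]/eqP->; rewrite eqxx ?(negPf vN) // eq_sym.
set A := [set σ | sprod σ == v].
have cardAC : #|~: A| = #|A|.
  rewrite -(card_imset _ (inv_inj flK)); apply: eq_card => σ.
  rewrite inE; apply/imsetP/eqP => [[τ]|e].
    by rewrite !inE sprodN => /eqP hτ ->; rewrite sprod_fl hτ opprK.
  by exists (fl σ); rewrite ?flK // !inE sprodN sprod_fl e.
have d_gt0 : (0 < d)%N := leq_ltn_trans (leq0n _) (ltn_ord l0).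
have := cardsC A; rewrite cardAC card_ffun card_bool card_ord addnn.
by rewrite -[X in (_ = 2 ^ X)%N](prednK d_gt0) expnS mul2n => /double_inj.
Qed.

Lemma sum_sprod_eq (v : R) : v ^+ 2 = 1 ->
  \sum_(σ : {ffun 'I_d -> bool}) sprod σ * (sprod σ == v)%:R = v * (2 ^ d.-1)%:R.
Proof.
move=> hv; rewrite -(card_sprod_eq hv) -sumr_const mulr_sumr [RHS]big_mkcond /=.
by apply: eq_bigr => σ _; rewrite inE; case: eqP => [->|]; rewrite ?mulr1 ?mulr0.
Qed.

End SignVectors.

(** * The quasimeasure [tau_F] *)

Section Quasimeasure.
Variables (R : realType) (d : nat) (E : set (Gd d)).
Hypothesis E_neq0 : E !=set0.
Implicit Types (a : 'I_d -> nat) (σ : {ffun 'I_d -> bool}).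

Local Notation child a σ := (fun l => 2 * a l + σ l)%N.

Lemma meets0 a : meets E 0 a.
Proof. by case: E_neq0 => g Eg; exists g; split => // l t. Qed.

Lemma meets_child k a : meets E k a -> exists σ, meets E k.+1 (child a σ).
Proof.
case=> g [hg Eg]; exists [ffun l => g l k], g; split => //.
apply/cubeS; rewrite halve_child; split=> // l.
by rewrite ffunE oddD oddM; case: (g l k).
Qed.

Lemma tauE_eq0 k a : ~ meets E k a -> tauE R E k a = 0.
Proof. by case: k => [/(_ (meets0 a))|k] //= /asboolPn/negPf->. Qed.

Lemma tauE_child k a σ : tauE R E k.+1 (child a σ) =
  if `[< meets E k.+1 (child a σ) >] then tauE R E k a / (nchildren E k a)%:R else 0.
Proof. by rewrite /= halve_child. Qed.

Lemma tauE_additive k a :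
  \sum_(σ : {ffun 'I_d -> bool}) tauE R E k.+1 (child a σ) = tauE R E k a.
Proof.
under eq_bigr => σ _ do rewrite tauE_child.
rewrite -big_mkcond (eq_bigl (fun σ => σ \in
  [set sg : {ffun 'I_d -> bool} | `[< meets E k.+1 (child a sg) >]])); last first.
  by move=> σ; apply/idP/asboolP.
rewrite sumr_const -/(nchildren E k a).
have [hm|hm] := pselect (meets E k a); last by rewrite tauE_eq0 // mul0r mul0rn.
have [σ hσ] := meets_child hm.
have hN : (0 < nchildren E k a)%N.
  by apply/card_gt0P; exists σ; apply/asboolP/asboolP.
by rewrite -[_ *+ _]mulr_natr divfK // pnatr_eq0 -lt0n.
Qed.

End Quasimeasure.

Section HatStable.
Variables (R : realType) (d : nat) (tau : nat -> ('I_d -> nat) -> R).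
Hypothesis tau_additive : forall k a,
  \sum_(σ : {ffun 'I_d -> bool}) tau k.+1 (fun l => 2 * a l + σ l)%N = tau k a.

Definition hat_at r m n k : R :=
  \sum_(a : {ffun 'I_d -> 'I_(2 ^ k)} | `[< cube k (fun l => val (a l)) `<=` cube r m >])
     Wk R k n (fun l => val (a l)) * tau k (fun l => val (a l)).

Lemma hatE n r m : hat tau n r m = hat_at r m n (hat_rank n r).
Proof. by []. Qed.

Lemma hat_fullE n : hat_full tau n = hat_at 0 (fun=> 0%N) n (hat_rank n 0).
Proof. by []. Qed.

Lemma hat_at_stable r m n k0 k : (r <= k0)%N -> (forall l, n l < 2 ^ k0)%N -> (k0 <= k)%N ->
  hat_at r m n k = hat_at r m n k0.
Proof.
move=> hr hn /subnKC <-; elim: (k - k0)%N => [|i IH]; first by rewrite addn0.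
rewrite -IH addnS /hat_at big_mkcond (sum_ffun_children _ (fun a =>
  if `[< cube (k0 + i).+1 a `<=` cube r m >] then Wk R (k0 + i).+1 n a * tau (k0 + i).+1 a
  else 0)) [in RHS]big_mkcond.
have hn' l : (n l < 2 ^ (k0 + i))%N by apply: leq_trans (hn l) _; rewrite leq_exp2l ?leq_addr.
apply: eq_bigr => x _.
under eq_bigr => σ _ do rewrite (asbool_equiv_eq (subcubeS _ _ (leq_trans hr (leq_addr i k0))))
  halve_child Wk_child //.
case: (asboolP (cube (k0 + i) (fun l => val (x l)) `<=` cube r m)) => _; last by rewrite big1.
by rewrite -mulr_sumr tau_additive.
Qed.

Lemma sum_subcube r t m (G : ('I_d -> nat) -> R) : (forall l, m l < 2 ^ r)%N ->
  \sum_(a : {ffun 'I_d -> 'I_(2 ^ (r + t))} |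
          `[< cube (r + t) (fun l => val (a l)) `<=` cube r m >]) G (fun l => val (a l))
  = \sum_(y : {ffun 'I_d -> 'I_(2 ^ t)}) G (fun l => 2 ^ t * m l + y l)%N.
Proof.
move=> hm; rewrite big_mkcond (sum_ffun_digits _ _
  (fun a => if `[< cube (r + t) a `<=` cube r m >] then G a else 0)).
pose mo : {ffun 'I_d -> 'I_(2 ^ r)} := [ffun l => Ordinal (hm l)].
have sub_mo (x : {ffun 'I_d -> 'I_(2 ^ r)}) (y : {ffun 'I_d -> 'I_(2 ^ t)}) :
    cube (r + t) (fun l => 2 ^ t * x l + y l)%N `<=` cube r m <-> x = mo.
  have hy l : (y l %/ 2 ^ t = 0)%N by rewrite divn_small.
  rewrite subcubeE // => [|l]; last exact: pow2_digits_lt.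
  split=> [e|->]; last by apply: funext => l; rewrite mulnC divnMDl ?expn_gt0 // hy addn0 ffunE.
  apply/ffunP => l; apply: val_inj; rewrite ffunE /= -(congr1 (fun f => f l) e).
  by rewrite mulnC divnMDl ?expn_gt0 // hy addn0.
rewrite (bigD1 mo) //= [X in _ + X]big1 ?addr0 => [|x hx].
  apply: eq_bigr => y _; rewrite asboolT; last exact/sub_mo.
  by congr G; apply: funext => l; rewrite ffunE.
by apply: big1 => y _; case: asboolP => // /sub_mo e; rewrite e eqxx in hx.
Qed.

End HatStable.

Section TauF.
Variables (R : realType) (d : nat) (l0 : 'I_d).
Local Notation F := (@Fset R d).
Implicit Types (a : 'I_d -> nat) (σ : {ffun 'I_d -> bool}) (h : Gd d).
Local Notation child a σ := (fun l => 2 * a l + σ l)%N.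

Lemma Fset_neq0 : F !=set0.
Proof. by exists (extend R l0 0 (fun _ _ => false)); apply: extend_Fset => j _; rewrite ltn0. Qed.

Lemma meetsE k a h : cube k a h ->
  meets F k a <-> forall j, (0 < j)%N -> (2 * ms j < k)%N -> Fs R j h.
Proof.
move=> hh; split=> [[g [hg Fg]] j hj hjk|hF].
  by apply: (Fs_prefix _ (Fg j hj)) => l t ht; apply: (cube_agree hg hh); lia.
exists (extend R l0 k h); split; last exact: extend_Fset.
by apply: cube_ext hh => l t ht; rewrite extend_low.
Qed.

Lemma meets_childE k a σ : meets F k a ->
  meets F k.+1 (child a σ) <->
  forall j, (0 < j)%N -> (2 * ms j = k)%N -> Fs R j (cube_point k.+1 (child a σ)).
Proof.
move=> hm; have hc : cube k.+1 (child a σ) (cube_point k.+1 (child a σ)) := cube_pointP _.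
have hlow := (meetsE (child_sub hc)).1 hm.
rewrite (meetsE hc); split=> [H j hj e|H j hj]; first by apply: H => //; lia.
by rewrite ltnS leq_eqVlt => /orP[/eqP|]; [apply: H | apply: hlow].
Qed.

Definition branching k : nat := if `[< pivot k >] then (2 ^ d.-1)%N else (2 ^ d)%N.

Lemma nchildren_Fset k a : meets F k a -> nchildren F k a = branching k.
Proof.
move=> hm; rewrite /branching; case: asboolP => [[j [hj e]]|np]; last first.
  have -> : (2 ^ d)%N = #|{ffun 'I_d -> bool}| by rewrite card_ffun card_bool card_ord.
  apply: eq_card => σ.
  apply/asboolP/asboolP/(meets_childE _ hm) => j hj e.
  by case: np; exists j.
have [a' [b' [ha hb hc]]] := cube_cover2 (ms j) (cube_point k a).
have hcσ σ : cube (2 * ms j) (fun l => 2 ^ ms j * a' l + b' l)%N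
    (cube_point k.+1 (child a σ)).
  by apply: cube_ext hc => l t ht; rewrite !cube_pointE ipoint_child // -e.
have meets_sprod σ : meets F k.+1 (child a σ) <-> sprod R σ = Wk R (ms j) a' b'.
  have Rk_child : Rk R (2 * ms j) (cube_point k.+1 (child a σ)) = sprod R σ.
    by rewrite RkE e; apply: eq_bigr => l _; rewrite child_point.
  rewrite (meets_childE _ hm) -Rk_child -(FsE R ha hb (hcσ σ)).
  split=> [H|H j' hj' e']; first exact: H.
  by have -> : j' = j by apply: ms_inj => //; lia.
rewrite -(card_sprod_eq l0 (Wv_sqr R a' (cube_point (ms j) b'))); apply: eq_card => σ.
rewrite inE; apply/asboolP/eqP => [/asboolP|] /meets_sprod //.
by move=> H; apply/asboolP.
Qed.

Fixpoint mass k : R := if k is k'.+1 then mass k' / (branching k')%:R else 1.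

Lemma tauE_Fset k a : tauE R F k a = if `[< meets F k a >] then mass k else 0.
Proof.
elim: k a => [|k IH] a /=; first by rewrite asboolT //; apply: (meets0 Fset_neq0).
case: asboolP => // hm.
have hm' : meets F k (fun l => a l %/ 2)%N by case: hm => g [/cubeS[hg _] Fg]; exists g.
by rewrite IH asboolT // nchildren_Fset.
Qed.

End TauF.

Section Mass.
Variables (R : realType) (d : nat).
Hypothesis d_gt0 : (0 < d)%N.
Local Notation mass := (@mass R d).

Lemma branching_gt0 k : (0 < branching d k)%N.
Proof. by rewrite /branching; case: ifP; rewrite expn_gt0. Qed.

Lemma massS k : mass k = mass k.+1 * (branching d k)%:R.
Proof. by rewrite /= divfK // pnatr_eq0 -lt0n branching_gt0. Qed.

Lemma mass_shift k t : (forall i, (k <= i < k + t)%N -> ~ pivot i) ->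
  mass k = mass (k + t) * (2 ^ (d * t))%:R.
Proof.
elim: t => [|t IH] np; first by rewrite addn0 muln0 mulr1.
rewrite IH => [|i /andP[h1 h2]]; last by apply: np; lia.
rewrite addnS massS /branching asboolF => [|]; last by apply: np; lia.
by rewrite -mulrA -natrM -expnD mulnS addnC.
Qed.

Lemma mass_pivot k : pivot k -> mass k = mass k.+1 * (2 ^ d.-1)%:R.
Proof. by move=> hp; rewrite massS /branching asboolT. Qed.

Lemma mass_ms s : (0 < s)%N -> mass (ms s) * (2 ^ (d * ms s))%:R = (2 ^ s.-1)%:R.
Proof.
elim: s => // s IH _; case: (posnP s) => [->|s_gt0]; first by rewrite /= muln0 mulr1.
have np i : (ms s <= i < ms s + ms s)%N \/ ((ms s + ms s).+1 <= i < ms s.+1)%N -> ~ pivot i.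
  move=> hi /(pivot_between s_gt0) e; have := msS s_gt0; lia.
have e1 := mass_shift (k := ms s) (t := ms s) (fun i hi => np i (or_introl hi)).
have e2 : mass (ms s + ms s) = mass (ms s + ms s).+1 * (2 ^ d.-1)%:R.
  by apply: mass_pivot; exists s; split => //; lia.
have e3 : mass (ms s + ms s).+1 = mass (ms s.+1) * (2 ^ (d * (ms s + ms s).+1))%:R.
  have -> : ms s.+1 = ((ms s + ms s).+1 + (ms s + ms s).+1)%N by rewrite msS //; lia.
  by apply: mass_shift => i hi; apply: np; right; rewrite msS //; lia.
rewrite e3 in e2.
have -> : (2 ^ s.+1.-1 = 2 * 2 ^ s.-1)%N by rewrite -expnS prednK.
rewrite natrM -IH // e1 e2 mulrCA -!mulrA -!natrM -expnS -!expnD.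
congr (_ * (2 ^ _)%:R).
by rewrite msS //; case: d d_gt0 => // d' _; lia.
Qed.

Lemma mass_top s : (0 < s)%N ->
  mass (2 * ms s).+1 * (2 ^ d.-1 * 2 ^ (d * ms s))%:R = (2 : R) ^ ((s%:Z - 1) - (d * ms s)%:Z).
Proof.
move=> s_gt0; have hp : pivot (2 * ms s) by exists s.
have hms := mass_ms s_gt0.
rewrite (mass_shift (k := ms s) (t := ms s)) in hms; last first.
  by move=> i hi /(pivot_between s_gt0) e; have := msS s_gt0; lia.
rewrite addnn -mul2n mass_pivot // in hms.
have hB : ((2 ^ (d * ms s))%:R : R) != 0 by rewrite pnatr_eq0 expn_eq0.
apply: (mulIf hB); rewrite natrM mulrA hms.
rewrite !natrX !exprnP -expfzDr ?pnatr_eq0 // subrK.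
by rewrite predn_int.
Qed.

End Mass.

(** * Cubes of rank [2 m_s + 1] *)

Section TopRank.
Variables (R : realType) (d : nat) (l0 : 'I_d) (s : nat).
Hypothesis s_gt0 : (0 < s)%N.
Local Notation c := (ms s).
Local Notation F := (@Fset R d).
Implicit Types (m y : 'I_d -> nat) (σ : {ffun 'I_d -> bool}).

Lemma sub_Ftilde m : cube c m `<=` @Ftilde R d (s - 1) <->
  forall j, (0 < j)%N -> (j < s)%N -> Fs R j (cube_point c m).
Proof.
have hm := @cube_pointP d c m; split=> [H j hj hjs|H g hg k /andP[hk hks]].
  by apply: H hm _ _; apply/andP; split=> //; lia.
have hk_s : (k < s)%N by lia.
apply: (Fs_prefix _ (H k hk hk_s)) => l t ht.
by apply: (cube_agree hm hg); have := double_ms_lt hk hk_s; lia.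
Qed.

Lemma meets_top m y σ : (forall l, m l < 2 ^ c)%N -> (forall l, y l < 2 ^ c)%N ->
  meets F (2 * c).+1 (fun l => 2 * (2 ^ c * m l + y l) + σ l)%N <->
  cube c m `<=` @Ftilde R d (s - 1) /\ sprod R σ = Wk R c m y.
Proof.
move=> hm hy; set z := fun l => (2 ^ c * m l + y l)%N.
set h := cube_point (2 * c).+1 (fun l => 2 * z l + σ l)%N.
have hh : cube (2 * c).+1 (fun l => 2 * z l + σ l)%N h := cube_pointP _.
have low j : (0 < j)%N -> (j < s)%N -> Fs R j h <-> Fs R j (cube_point c m).
  move=> hj hjs; have := double_ms_lt hj hjs => hjc.
  have e l t : (t <= 2 * ms j)%N -> h l t = cube_point c m l t.
    by move=> ht; have [+ _ _] := ipoint_top (m l) (σ l) (hy l); apply; lia.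
  by split; apply: Fs_prefix => l t ht; rewrite e.
have top : Fs R s h <-> sprod R σ = Wk R c m y.
  rewrite (FsE R hm hy (child_sub hh)) RkE.
  by rewrite (eq_bigr (fun l => sgn R (σ l))) // => l _; rewrite /h child_point.
rewrite (meetsE R l0 hh) sub_Ftilde; split=> [H|[Hlow Htop] j hj hjk].
  split=> [j hj hjs|]; last by apply/top/H.
  by apply/low/H => //; have := double_ms_lt hj hjs; lia.
case: (ltngtP j s) => [hjs|hjs|->]; [exact/low/Hlow | | exact/top].
by have := ms_le (ltn_trans s_gt0 (ltnSn s)) hjs; rewrite msS //; lia.
Qed.

End TopRank.

Section Lemma2.
Variables (R : realType) (d : nat) (l0 : 'I_d) (s : nat).
Hypothesis s_gt0 : (0 < s)%N.
Variables p q : 'I_d -> nat.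
Hypotheses (hp : forall l, (p l < 2 ^ ms s)%N) (hq : forall l, (q l < 2 ^ ms s)%N).
Local Notation c := (ms s).
Local Notation F := (@Fset R d).
Local Notation V m := (cube c m `<=` @Ftilde R d (s - 1)).
Let n l := (2 ^ (2 * c) + 2 ^ c * p l + q l)%N.
Let d_gt0 : (0 < d)%N := leq_ltn_trans (leq0n _) (ltn_ord l0).
Let tauF_additive : forall k a, \sum_(σ : {ffun 'I_d -> bool})
    tauE R F k.+1 (fun l => 2 * a l + σ l)%N = tauE R F k a :=
  tauE_additive R (Fset_neq0 R l0).

Lemma top_cell_term m y (σ : {ffun 'I_d -> bool}) :
  (forall l, m l < 2 ^ c)%N -> (forall l, y l < 2 ^ c)%N ->
  let a l := (2 * (2 ^ c * m l + y l) + σ l)%N in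
  Wk R (2 * c).+1 n a * tauE R F (2 * c).+1 a =
  Ind R (V m) * mass R d (2 * c).+1 *
    (Wk R c q m * Wk R c p y * (sprod R σ * (sprod R σ == Wk R c m y)%:R)).
Proof.
move=> hm hy a; rewrite (tauE_Fset R l0) (asbool_equiv_eq (meets_top R l0 s_gt0 σ hm hy)).
have -> : Wk R (2 * c).+1 n a = Wk R c q m * Wk R c p y * sprod R σ.
  rewrite /Wk /Wv /sprod -big_split -big_split /=.
  by apply: eq_bigr => l _; apply: W_top.
rewrite /Ind; case: (asboolP (V m)) => [HV|HV].
  rewrite mul1r; case: eqP => [e|ne]; first by rewrite asboolT // mulr1; ring.
  by rewrite asboolF ?mulr0 // => -[].
by rewrite asboolF ?mul0r ?mulr0 // => -[].
Qed.

Lemma n_lt l : (n l < 2 ^ (c + c.+1))%N.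
Proof.
have -> : n l = (2 ^ c * (p l + 2 ^ c) + q l)%N by rewrite /n mulnDr -expnD addnn -mul2n; lia.
by rewrite [(c + _)%N]addnC; apply: pow2_digits_lt (hq l); rewrite expnS; have := hp l; lia.
Qed.

Lemma top_rank_le r : (c + c.+1 <= hat_rank n r)%N.
Proof.
apply: leq_trans (leq_addl r _); apply: leq_trans (leq_bigmax l0).
by rewrite /n; have := ltn_expl (2 * c) (ltnSn 1); lia.
Qed.

Let G a := Wk R (c + c.+1) n a * tauE R F (c + c.+1) a.

Lemma hat_as_sum m : (forall l, m l < 2 ^ c)%N ->
  hat (tauE R F) n c m =
  \sum_(y : {ffun 'I_d -> 'I_(2 ^ c.+1)}) G (fun l => 2 ^ c.+1 * m l + y l)%N.
Proof.
move=> hm; rewrite -(sum_subcube _ G hm) hatE.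
exact: (hat_at_stable tauF_additive) (leq_addr _ _) n_lt (top_rank_le c).
Qed.

Lemma hat_part m : (forall l, m l < 2 ^ c)%N ->
  hat (tauE R F) n c m =
  (2 : R) ^ ((s%:Z - 1) - (d * c)%:Z) * Wk R c q m * kdelta R p m * Ind R (V m).
Proof.
move=> hm; rewrite hat_as_sum //.
rewrite (sum_ffun_children _ (fun b => G (fun l => 2 ^ c.+1 * m l + b l)%N)).
have idx (y : {ffun 'I_d -> 'I_(2 ^ c)}) (σ : {ffun 'I_d -> bool}) :
    G (fun l => 2 ^ c.+1 * m l + (2 * y l + σ l))%N =
    Wk R (2 * c).+1 n (fun l => 2 * (2 ^ c * m l + y l) + σ l)%N *
    tauE R F (2 * c).+1 (fun l => 2 * (2 ^ c * m l + y l) + σ l)%N.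
  rewrite /G (_ : (c + c.+1 = (2 * c).+1)%N); last by lia.
  by congr (_ * _); congr (_ _ _); apply: funext => l; rewrite expnS; lia.
under eq_bigr => y _ do under eq_bigr => σ _ do
  rewrite idx (top_cell_term _ hm (fun l => ltn_ord (y l))).
have regroup (x a b w k : R) : x * (a * b * (w * k)) = x * a * k * (b * w) by ring.
under eq_bigr => y _ do rewrite -!mulr_sumr (sum_sprod_eq l0 (Wv_sqr _ _ _)) regroup.
rewrite -mulr_sumr (Wk_orthogonal _ hp hm) -(mass_top R d_gt0 s_gt0).
by rewrite [(c * d)%N]mulnC natrM; ring.
Qed.

Lemma hat_full_part :
  hat_full (tauE R F) n = (2 : R) ^ ((s%:Z - 1) - (d * c)%:Z) * Wk R c q p * Ind R (V p).
Proof.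
rewrite hat_fullE (hat_at_stable tauF_additive _ (leq0n _) n_lt (top_rank_le 0)).
rewrite /hat_at (eq_bigl xpredT) => [|a]; last by apply/asboolP => g _ l t; rewrite ltn0.
rewrite (sum_ffun_digits _ _ G).
transitivity (\sum_(x : {ffun 'I_d -> 'I_(2 ^ c)}) hat (tauE R F) n c (fun l => val (x l))).
  by apply: eq_bigr => x _; rewrite (hat_as_sum (fun l => ltn_ord (x l))).
under eq_bigr => x _ do rewrite (hat_part (fun l => ltn_ord (x l))).
pose po : {ffun 'I_d -> 'I_(2 ^ c)} := [ffun l => Ordinal (hp l)].
have val_po : (fun l => val (po l)) = p by apply: funext => l; rewrite ffunE.
rewrite (bigD1 po) //= big1 => [|x /eqP ne].
  by rewrite val_po /kdelta asboolT // mulr1 addr0.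
rewrite /kdelta asboolF ?mulr0 ?mul0r // => e; apply: ne; apply/ffunP => l.
by apply: val_inj; rewrite ffunE /= -(congr1 (fun f => f l) e).
Qed.

End Lemma2.

Theorem lemma2 (R : realType) (d : nat) (hd : (2 <= d)%N) (s : nat) (hs : (1 <= s)%N)
    (p q : 'I_d -> nat)
    (hp : forall l, (p l < 2 ^ ms s)%N) (hq : forall l, (q l < 2 ^ ms s)%N) :
  let n := fun l => (2 ^ (2 * ms s) + 2 ^ ms s * p l + q l)%N in
  let tau := tauE R (@Fset R d) in
  let c : R := (2 : R) ^ ((s%:Z - 1) - (d * ms s)%:Z) in
  (forall m : 'I_d -> nat, (forall l, (m l < 2 ^ ms s)%N) ->
     hat tau n (ms s) m =
       c * Wk R (ms s) q m * kdelta R p m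
         * Ind R (cube (ms s) m `<=` @Ftilde R d (s - 1)))
  /\
  hat_full tau n = c * Wk R (ms s) q p * Ind R (cube (ms s) p `<=` @Ftilde R d (s - 1)).
Proof.
move=> n tau c; have l0 : 'I_d := Ordinal (ltnW hd).
split=> [m hm|]; [exact (hat_part R l0 hs hp hq hm) | exact (hat_full_part R l0 hs hp hq)].
Qed.
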